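(* Let $x,y\ge2$ be coprime integers, $p\ge 2$, $q=pxy-1$, and let $G$ be the fundamental group of the complement of the $(p,q)$-cable of the $(x,y)$-torus knot, with canonical meridian and longitude $\mu_C,\lambda_C$ of the cable. Then for every positive integer $\beta$ and every left-orderable quotient $Q$ of $G$, the image of $\mu_C^{pq\beta-1}\lambda_C^{\beta}$ in $Q$ is not the identity.
   Context: Explicitly, $G$ is generated by $a,b,t$ with relations $a^x=b^y$ and $\mu^q\lambda^p=t^p$, where $\mu=b^ja^i$, $\lambda=\mu^{-xy}a^x$ with $xj+yi=1$; and $\mu_C=\mu^u\lambda^vt^{-v}$, $\lambda_C=\mu_C^{-pq}t^p$ with $pu-qv=1$. A left-orderable group is a nontrivial group admitting a total order invariant under left multiplication. *)

From Stdlib Require Import ZArith.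
Open Scope Z_scope.

Record Group := {
  carrier :> Type;
  gmul : carrier -> carrier -> carrier;
  ginv : carrier -> carrier;
  gone : carrier;
  gmul_assoc : forall x y z, gmul x (gmul y z) = gmul (gmul x y) z;
  gmul_1l : forall x, gmul gone x = x;
  gmul_1r : forall x, gmul x gone = x;
  gmul_Vl : forall x, gmul (ginv x) x = gone;
  gmul_Vr : forall x, gmul x (ginv x) = gone
}.

Arguments gmul {g}.
Arguments ginv {g}.
Arguments gone {g}.

Fixpoint gpown {G : Group} (g : G) (n : nat) : G :=
  match n with
  | O => gone
  | S n' => gmul g (gpown g n')
  end.

Definition gpow {G : Group} (g : G) (k : Z) : G :=
  if (0 <=? k)%Z then gpown g (Z.to_nat k) else ginv (gpown g (Z.to_nat (- k))).

Inductive generated {G : Group} (S : G -> Prop) : G -> Prop :=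
  | gen_one : generated S gone
  | gen_base : forall g, S g -> generated S g
  | gen_mul : forall g h, generated S g -> generated S h -> generated S (gmul g h)
  | gen_inv : forall g, generated S g -> generated S (ginv g).

Definition left_orderable (G : Group) : Prop :=
  (exists g : G, g <> gone) /\
  exists le : G -> G -> Prop,
    (forall x, le x x) /\
    (forall x y, le x y -> le y x -> x = y) /\
    (forall x y z, le x y -> le y z -> le x z) /\
    (forall x y, le x y \/ le y x) /\
    (forall g x y, le x y -> le (gmul g x) (gmul g y)).

Definition mu_el {G : Group} (a b : G) (i j : Z) : G := gmul (gpow b j) (gpow a i).
Definition lambda_el {G : Group} (a b : G) (x y i j : Z) : G :=
  gmul (gpow (mu_el a b i j) (- (x * y))) (gpow a x).
Definition muC_el {G : Group} (a b t : G) (x y i j u v : Z) : G :=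
  gmul (gmul (gpow (mu_el a b i j) u) (gpow (lambda_el a b x y i j) v)) (gpow t (- v)).
Definition lambdaC_el {G : Group} (a b t : G) (x y i j u v p q : Z) : G :=
  gmul (gpow (muC_el a b t x y i j u v) (- (p * q))) (gpow t p).

From Stdlib Require Import ZArith Lia Classical.
Open Scope Z_scope.

(* Put c = a^x = b^y, which commutes with a and b, and mu = b^j a^i, which commutes with c.
   The relations give t^p = mu^-1 c^p, and triviality of the word means mu_C = t^(p beta);
   computing t^(-v p) in two ways then yields mu^(1 + p beta) = c^(p^2 beta).
   In a left-ordered quotient c <> 1, since otherwise a, b, t are torsion, hence trivial and
   the quotient is trivial.  Order it so that c > 1.  Dividing j = y s + r and i = x s' + r'
   gives s + s' = -1 with 0 < r < y and 0 < r' < x, so mu = c^-1 b^r a^r' < c^-1 c c = c,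
   whence mu^(1 + p beta) < c^(1 + p beta) < c^(p^2 beta), a contradiction. *)

(** * Integer powers in a group *)

Section GroupLaws.
Context {G : Group}.
Implicit Types g h x y : G.

Lemma gmul_cancel_l g x y : gmul g x = gmul g y -> x = y.
Proof.
  intro E.
  rewrite <- (gmul_1l G x), <- (gmul_1l G y), <- (gmul_Vl G g), <- !gmul_assoc, E.
  reflexivity.
Qed.

Lemma ginv_unique x y : gmul x y = gone -> y = ginv x.
Proof. intro E. apply (gmul_cancel_l x). rewrite E, gmul_Vr. reflexivity. Qed.

Lemma ginv_gmul x y : ginv (gmul x y) = gmul (ginv y) (ginv x).
Proof.
  symmetry; apply ginv_unique.
  rewrite <- gmul_assoc, (gmul_assoc _ y), gmul_Vr, gmul_1l, gmul_Vr.
  reflexivity.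
Qed.

Lemma ginv_gone : ginv (@gone G) = gone.
Proof. symmetry; apply ginv_unique, gmul_1l. Qed.

Lemma gpown_gone n : gpown (@gone G) n = gone.
Proof. induction n as [|n IH]; simpl; [|rewrite IH, gmul_1l]; reflexivity. Qed.

Lemma gpown_succ_r g n : gpown g (S n) = gmul (gpown g n) g.
Proof.
  induction n as [|n IH]; simpl in *; [rewrite gmul_1l, gmul_1r; reflexivity|].
  rewrite IH at 1. rewrite gmul_assoc. reflexivity.
Qed.

Lemma gpow_1 g : gpow g 1 = g.
Proof. apply gmul_1r. Qed.

Lemma gpow_succ g k : gpow g (k + 1) = gmul g (gpow g k).
Proof.
  unfold gpow.
  destruct (Z.leb_spec 0 k), (Z.leb_spec 0 (k + 1)); try lia.
  - rewrite Z2Nat.inj_add, PeanoNat.Nat.add_1_r by lia. reflexivity.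
  - replace k with (-1) by lia. simpl. rewrite gmul_1r, gmul_Vr. reflexivity.
  - replace (Z.to_nat (- k)) with (S (Z.to_nat (- (k + 1)))) by lia.
    rewrite gpown_succ_r, ginv_gmul, gmul_assoc, gmul_Vr, gmul_1l.
    reflexivity.
Qed.

Lemma gpow_add g m n : gpow g (m + n) = gmul (gpow g m) (gpow g n).
Proof.
  revert n; induction m as [|m IH|m IH] using Z.peano_ind; intro n.
  - rewrite Z.add_0_l. symmetry; apply gmul_1l.
  - replace (Z.succ m + n) with (m + n + 1) by lia.
    rewrite <- Z.add_1_r, !gpow_succ, IH, gmul_assoc.
    reflexivity.
  - apply (gmul_cancel_l g).
    rewrite gmul_assoc, <- !gpow_succ.
    replace (Z.pred m + n + 1) with (m + n) by lia.
    replace (Z.pred m + 1) with m by lia.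
    apply IH.
Qed.

Lemma gpow_succ_r g k : gpow g (k + 1) = gmul (gpow g k) g.
Proof. rewrite gpow_add, gpow_1. reflexivity. Qed.

Lemma gpow_opp g k : gpow g (- k) = ginv (gpow g k).
Proof. apply ginv_unique. rewrite <- gpow_add, Z.add_opp_diag_r. reflexivity. Qed.

Lemma gpow_mul g m n : gpow g (m * n) = gpow (gpow g m) n.
Proof.
  induction n as [|n IH|n IH] using Z.peano_ind.
  - rewrite Z.mul_0_r. reflexivity.
  - rewrite <- Z.add_1_r, gpow_succ, <- IH, <- gpow_add.
    f_equal. ring.
  - apply (gmul_cancel_l (gpow g m)).
    rewrite <- gpow_add, <- gpow_succ.
    replace (Z.pred n + 1) with n by lia.
    rewrite <- IH. f_equal. lia.
Qed.

Lemma gpow_gone k : gpow (@gone G) k = gone.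
Proof. unfold gpow. destruct (0 <=? k); rewrite gpown_gone; [|apply ginv_gone]; reflexivity. Qed.

Definition commute g h := gmul g h = gmul h g.

Lemma commute_sym g h : commute g h -> commute h g.
Proof. unfold commute; auto. Qed.

Lemma commute_gmul_l g1 g2 h : commute g1 h -> commute g2 h -> commute (gmul g1 g2) h.
Proof.
  unfold commute; intros E1 E2.
  rewrite <- gmul_assoc, E2, gmul_assoc, E1, gmul_assoc. reflexivity.
Qed.

Lemma commute_gpow_l g h k : commute g h -> commute (gpow g k) h.
Proof.
  intro E; induction k as [|k IH|k IH] using Z.peano_ind.
  - unfold commute. rewrite gmul_1l, gmul_1r. reflexivity.
  - rewrite <- Z.add_1_r, gpow_succ. apply commute_gmul_l; assumption.
  - unfold commute in *. apply (gmul_cancel_l g).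
    rewrite gmul_assoc, <- gpow_succ, (gmul_assoc _ g h), E, <- gmul_assoc, <- gpow_succ.
    replace (Z.pred k + 1) with k by lia. exact IH.
Qed.

Lemma commute_gpow g h k l : commute g h -> commute (gpow g k) (gpow h l).
Proof. intro E. apply commute_gpow_l, commute_sym, commute_gpow_l, commute_sym, E. Qed.

Lemma gpow_gmul_commute g h n :
  commute g h -> gpow (gmul g h) n = gmul (gpow g n) (gpow h n).
Proof.
  intro E.
  assert (Hgh : forall k, gmul (gmul g h) (gmul (gpow g k) (gpow h k))
                          = gmul (gpow g (k + 1)) (gpow h (k + 1))).
  { intro k. pose proof (commute_gpow_l g h k E) as Ek. unfold commute in Ek.
    rewrite !gpow_succ, <- !gmul_assoc, (gmul_assoc _ h), <- Ek, !gmul_assoc.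
    reflexivity. }
  induction n as [|n IH|n IH] using Z.peano_ind.
  - symmetry; apply gmul_1l.
  - rewrite <- Z.add_1_r, gpow_succ, IH. apply Hgh.
  - apply (gmul_cancel_l (gmul g h)).
    rewrite <- gpow_succ, Hgh.
    replace (Z.pred n + 1) with n by lia. exact IH.
Qed.

End GroupLaws.

Definition gpow2 {G : Group} (mu c : G) (k l : Z) : G := gmul (gpow mu k) (gpow c l).

Section CommutingPair.
Context {G : Group} (mu c : G).
Hypothesis Hmc : commute mu c.

Lemma gpow2_k0 k : gpow2 mu c k 0 = gpow mu k.
Proof. apply gmul_1r. Qed.

Lemma gpow2_0l l : gpow2 mu c 0 l = gpow c l.
Proof. apply gmul_1l. Qed.

Lemma gpow2_mul k l k' l' :
  gmul (gpow2 mu c k l) (gpow2 mu c k' l') = gpow2 mu c (k + k') (l + l').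
Proof.
  unfold gpow2. rewrite !gpow_add, <- !gmul_assoc. f_equal.
  rewrite !gmul_assoc. f_equal. symmetry. apply commute_gpow, Hmc.
Qed.

Lemma gpow2_gpow k l n : gpow (gpow2 mu c k l) n = gpow2 mu c (k * n) (l * n).
Proof.
  unfold gpow2. rewrite gpow_gmul_commute by (apply commute_gpow, Hmc).
  rewrite !gpow_mul. reflexivity.
Qed.

Lemma gpow2_commute k l k' l' : commute (gpow2 mu c k l) (gpow2 mu c k' l').
Proof. unfold commute. rewrite !gpow2_mul. f_equal; lia. Qed.

Lemma gpow2_eq k l k' l' :
  gpow2 mu c k l = gpow2 mu c k' l' -> gpow mu (k' - k) = gpow c (l - l').
Proof.
  intro E.
  rewrite <- gpow2_k0, <- gpow2_0l.
  replace (k' - k) with (- k + k') by lia. replace 0 with (- l' + l') at 1 by lia.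
  rewrite <- gpow2_mul, <- E, gpow2_mul. f_equal; lia.
Qed.

End CommutingPair.

(** * Left orders *)

Record left_order {G : Group} (le : G -> G -> Prop) : Prop := {
  lo_refl : forall x, le x x;
  lo_antisym : forall x y, le x y -> le y x -> x = y;
  lo_trans : forall x y z, le x y -> le y z -> le x z;
  lo_total : forall x y, le x y \/ le y x;
  lo_mul_l : forall g x y, le x y -> le (gmul g x) (gmul g y)
}.

Lemma left_orderable_left_order (G : Group) :
  left_orderable G -> (exists g : G, g <> gone) /\ exists le : G -> G -> Prop, left_order le.
Proof.
  intros [Hnt [le (H1 & H2 & H3 & H4 & H5)]].
  split; [exact Hnt | exists le; constructor; assumption].
Qed.

Lemma left_order_rev {G : Group} (le : G -> G -> Prop) :
  left_order le -> left_order (fun x y => le y x).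
Proof. intros []; constructor; eauto. Qed.

Definition strict {G : Group} (le : G -> G -> Prop) (x y : G) := le x y /\ x <> y.

Section LeftOrder.
Context {G : Group} (le : G -> G -> Prop).
Hypothesis Hle : left_order le.

Lemma strict_mul_l g x y : strict le x y -> strict le (gmul g x) (gmul g y).
Proof.
  intros [Hxy Hne]. split; [apply (lo_mul_l _ Hle), Hxy|].
  intro E. apply Hne, (gmul_cancel_l g), E.
Qed.

Lemma strict_trans x y z : strict le x y -> strict le y z -> strict le x z.
Proof.
  intros [Hxy Hne] [Hyz _]. split; [apply (lo_trans _ Hle) with y; assumption|].
  intros <-. apply Hne, (lo_antisym _ Hle); assumption.
Qed.

Lemma strict_total x y : x <> y -> strict le x y \/ strict le y x.
Proof. intro Hne. destruct (lo_total _ Hle x y); [left | right]; split; auto. Qed.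

Lemma gpow_gt1 g n : strict le gone g -> 0 < n -> strict le gone (gpow g n).
Proof.
  intro Hg. revert n. apply (Z.lt_ind (fun n => strict le gone (gpow g n)));
    [intros ? ? ->; reflexivity | rewrite gpow_1; exact Hg |].
  intros n _ IH. rewrite <- Z.add_1_r, gpow_succ.
  apply strict_trans with g; [exact Hg|].
  rewrite <- (gmul_1r G g) at 1. apply strict_mul_l, IH.
Qed.

Lemma gpow_lt_mono g n m : strict le gone g -> n < m -> strict le (gpow g n) (gpow g m).
Proof.
  intros Hg Hnm. replace m with (n + (m - n)) by lia.
  rewrite gpow_add, <- (gmul_1r G (gpow g n)) at 1.
  apply strict_mul_l, gpow_gt1; [exact Hg | lia].
Qed.

Lemma gpow_lt_gpow m c n :
  commute m c -> strict le m c -> 0 < n -> strict le (gpow m n) (gpow c n).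
Proof.
  intros Hmc Hlt. revert n. apply (Z.lt_ind (fun n => strict le (gpow m n) (gpow c n)));
    [intros ? ? ->; reflexivity | rewrite !gpow_1; exact Hlt |].
  intros n _ IH. rewrite <- Z.add_1_r, gpow_succ, gpow_succ_r.
  apply strict_trans with (gmul m (gpow c n)); [apply strict_mul_l, IH|].
  rewrite <- (commute_gpow_l c m n (commute_sym _ _ Hmc)). apply strict_mul_l, Hlt.
Qed.

Lemma gpow_neq_of_lt m c N M :
  commute m c -> strict le m c -> strict le gone c -> 0 < N < M -> gpow m N <> gpow c M.
Proof.
  intros Hmc Hlt Hc HNM E.
  assert (Hcontra : strict le (gpow m N) (gpow c M)).
  { apply strict_trans with (gpow c N);
      [apply gpow_lt_gpow | apply gpow_lt_mono]; auto; lia. }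
  apply (proj2 Hcontra), E.
Qed.

Lemma gmul_lt_sqr w1 w2 c :
  commute w1 c -> strict le w1 c -> strict le w2 c -> strict le (gmul w1 w2) (gmul c c).
Proof.
  intros Hw1c Hw1 Hw2.
  apply strict_trans with (gmul w1 c); [apply strict_mul_l, Hw2|].
  rewrite Hw1c. apply strict_mul_l, Hw1.
Qed.

End LeftOrder.

Lemma strict_rev {G : Group} (le : G -> G -> Prop) (x y : G) :
  strict le x y -> strict (fun x y => le y x) y x.
Proof. intros [Hxy Hne]. split; [exact Hxy | congruence]. Qed.

Lemma exists_left_order_gt1 {G : Group} (le : G -> G -> Prop) (c : G) :
  left_order le -> c <> gone -> exists le' : G -> G -> Prop, left_order le' /\ strict le' gone c.
Proof.
  intros Hle Hc. destruct (strict_total le Hle gone c) as [H | H]; [congruence | |].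
  - exists le. split; assumption.
  - exists (fun x y => le y x). split; [apply left_order_rev, Hle | apply strict_rev, H].
Qed.

Lemma left_order_torsion_free {G : Group} (le : G -> G -> Prop) (g : G) n :
  left_order le -> 0 < n -> gpow g n = gone -> g = gone.
Proof.
  intros Hle Hn E. apply NNPP. intro Hg.
  destruct (exists_left_order_gt1 le g Hle Hg) as [le' [Hle' Hg1]].
  apply (proj2 (gpow_gt1 le' Hle' g n Hg1 Hn)). symmetry; exact E.
Qed.

Lemma gt1_of_gpow_gt1 {G : Group} (le : G -> G -> Prop) (g : G) n :
  left_order le -> 0 < n -> strict le gone (gpow g n) -> strict le gone g.
Proof.
  intros Hle Hn Hgn. destruct (classic (g = gone)) as [-> | Hg].
  - rewrite gpow_gone in Hgn. destruct (proj2 Hgn); reflexivity.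
  - destruct (strict_total le Hle gone g (not_eq_sym Hg)) as [H | H]; [exact H|].
    pose proof (gpow_gt1 _ (left_order_rev le Hle) g n (strict_rev le g gone H) Hn) as [H' _].
    destruct (proj2 Hgn). apply (lo_antisym _ Hle); [apply Hgn | exact H'].
Qed.

(** * The cable space group *)

Lemma bezout_div_mod x y i j :
  2 <= x -> 2 <= y -> x * j + y * i = 1 ->
  j / y + i / x = -1 /\ 0 < j mod y /\ 0 < i mod x.
Proof.
  intros Hx Hy Hb.
  pose proof (Z.div_mod j y ltac:(lia)). pose proof (Z.mod_pos_bound j y ltac:(lia)).
  pose proof (Z.div_mod i x ltac:(lia)). pose proof (Z.mod_pos_bound i x ltac:(lia)).
  set (s := j / y) in *. set (r := j mod y) in *.
  set (s' := i / x) in *. set (r' := i mod x) in *.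
  clearbody s r s' r'. subst j i.
  assert (Hr : r <> 0).
  { intros ->. assert (y * (x * (s + s') + r') = 1) by lia.
    destruct (Z.le_gt_cases (x * (s + s') + r') 0); nia. }
  assert (Hr' : r' <> 0).
  { intros ->. assert (x * (y * (s + s') + r) = 1) by lia.
    destruct (Z.le_gt_cases (y * (s + s') + r) 0); nia. }
  repeat split; try lia.
  (* x r + y r' = 1 - x y (s + s') with 0 < x r, y r' < x y *)
  assert (x * r <= x * (y - 1)) by nia. assert (y * r' <= y * (x - 1)) by nia.
  destruct (Z.le_gt_cases (s + s') (-2)); [|destruct (Z.le_gt_cases 0 (s + s'))]; nia.
Qed.

Section TorusKnotGroup.
Context {G : Group} (a b : G) (x y i j : Z).
Hypothesis Hab : gpow a x = gpow b y.

Lemma commute_center_a : commute a (gpow a x).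
Proof. apply commute_sym, commute_gpow_l. reflexivity. Qed.

Lemma commute_center_b : commute b (gpow a x).
Proof. rewrite Hab. apply commute_sym, commute_gpow_l. reflexivity. Qed.

Lemma commute_mu_el : commute (mu_el a b i j) (gpow a x).
Proof.
  apply commute_gmul_l; apply commute_gpow_l; [apply commute_center_b | apply commute_center_a].
Qed.

Lemma lambda_el_gpow2 : lambda_el a b x y i j = gpow2 (mu_el a b i j) (gpow a x) (- (x * y)) 1.
Proof. unfold lambda_el, gpow2. rewrite gpow_1. reflexivity. Qed.

Lemma mu_el_decomp :
  2 <= x -> 2 <= y -> x * j + y * i = 1 ->
  mu_el a b i j = gmul (ginv (gpow a x)) (gmul (gpow b (j mod y)) (gpow a (i mod x))).
Proof.
  intros Hx Hy Hji.
  destruct (bezout_div_mod x y i j Hx Hy Hji) as [Hs _].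
  unfold mu_el.
  rewrite (Z.div_mod j y) at 1 by lia. rewrite (Z.div_mod i x) at 1 by lia.
  rewrite !gpow_add, !gpow_mul, <- Hab.
  rewrite <- !gmul_assoc, (gmul_assoc _ (gpow b _) (gpow (gpow a x) (i / x))).
  rewrite (commute_gpow _ _ (j mod y) (i / x) commute_center_b).
  rewrite !gmul_assoc, <- gpow_add, Hs, (gpow_opp _ 1), gpow_1, <- !gmul_assoc.
  reflexivity.
Qed.

Lemma mu_el_lt_center (le : G -> G -> Prop) :
  left_order le -> 2 <= x -> 2 <= y -> x * j + y * i = 1 ->
  strict le gone (gpow a x) -> strict le (mu_el a b i j) (gpow a x).
Proof.
  intros Hle Hx Hy Hji Hc.
  destruct (bezout_div_mod x y i j Hx Hy Hji) as [_ [Hr Hr']].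
  pose proof (Z.mod_pos_bound j y ltac:(lia)). pose proof (Z.mod_pos_bound i x ltac:(lia)).
  assert (Ha : strict le gone a) by (apply (gt1_of_gpow_gt1 le a x); auto; lia).
  assert (Hb : strict le gone b).
  { apply (gt1_of_gpow_gt1 le b y); auto; [lia | rewrite <- Hab; exact Hc]. }
  assert (Hbr : strict le (gpow b (j mod y)) (gpow a x)).
  { rewrite Hab. apply gpow_lt_mono; auto; lia. }
  assert (Har : strict le (gpow a (i mod x)) (gpow a x)) by (apply gpow_lt_mono; auto; lia).
  pose proof (gmul_lt_sqr le Hle _ _ _ (commute_gpow_l _ _ (j mod y) commute_center_b) Hbr Har)
    as Hsq.
  apply (strict_mul_l le Hle (ginv (gpow a x))) in Hsq.
  rewrite (gmul_assoc _ (ginv (gpow a x)) (gpow a x)), gmul_Vl, gmul_1l in Hsq.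
  rewrite mu_el_decomp; assumption.
Qed.

Lemma muC_el_gpow2 t u v :
  muC_el a b t x y i j u v
  = gmul (gpow2 (mu_el a b i j) (gpow a x) (u - x * y * v) v) (gpow t (- v)).
Proof.
  unfold muC_el.
  rewrite lambda_el_gpow2, gpow2_gpow, <- (gpow2_k0 _ (gpow a x) u), gpow2_mul
    by apply commute_mu_el.
  f_equal. f_equal; ring.
Qed.

End TorusKnotGroup.

Lemma commuting_word_eq {G : Group} (m s : G) n beta :
  commute m s ->
  gmul (gpow m (n * beta - 1)) (gpow (gmul (gpow m (- n)) s) beta)
  = gmul (ginv m) (gpow s beta).
Proof.
  intro Hms.
  rewrite gpow_gmul_commute, <- gpow_mul, gmul_assoc, <- gpow_add
    by (apply commute_gpow_l, Hms).
  replace (n * beta - 1 + - n * beta) with (- (1)) by ring.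
  rewrite gpow_opp, gpow_1. reflexivity.
Qed.

Lemma gpow_eq_of_word_gone {G : Group} (mu c t : G) k v p n beta :
  commute mu c -> gpow t p = gpow2 mu c (-1) p ->
  gmul (gpow (gmul (gpow2 mu c k v) (gpow t (- v))) (n * beta - 1))
       (gpow (gmul (gpow (gmul (gpow2 mu c k v) (gpow t (- v))) (- n)) (gpow t p)) beta)
  = gone ->
  gpow mu (k * p + v + p * beta) = gpow c (p * p * beta).
Proof.
  intros Hmc Htp Hw.
  set (m := gmul (gpow2 mu c k v) (gpow t (- v))) in Hw.
  assert (Hms : commute m (gpow t p)).
  { apply commute_gmul_l; [rewrite Htp; apply gpow2_commute, Hmc|].
    apply commute_gpow. reflexivity. }
  rewrite commuting_word_eq in Hw by exact Hms.
  assert (Hm : gpow (gpow t p) beta = m).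
  { apply (gmul_cancel_l (ginv m)). rewrite Hw, gmul_Vl. reflexivity. }
  rewrite Htp, gpow2_gpow in Hm by exact Hmc.
  assert (Ht : gpow t (- v) = gpow2 mu c (- k - beta) (- v + p * beta)).
  { apply (gmul_cancel_l (gpow2 mu c k v)).
    change (gmul (gpow2 mu c k v) (gpow t (- v))) with m.
    rewrite <- Hm, gpow2_mul by exact Hmc. f_equal; ring. }
  (* compute t^(-v p) in two ways *)
  assert (Htt : gpow (gpow t (- v)) p = gpow (gpow t p) (- v))
    by (rewrite <- !gpow_mul; f_equal; ring).
  rewrite Ht, Htp, !gpow2_gpow in Htt by exact Hmc.
  apply gpow2_eq in Htt; [|exact Hmc].
  replace (k * p + v + p * beta) with (-1 * - v - (- k - beta) * p) by ring.
  replace (p * p * beta) with ((- v + p * beta) * p - p * - v) by ring.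
  exact Htt.
Qed.

Lemma generated_gone {G : Group} (S : G -> Prop) (g : G) :
  (forall h, S h -> h = gone) -> generated S g -> g = gone.
Proof.
  intros HS Hg. induction Hg as [| g Hg | g h _ IHg _ IHh | g _ IHg].
  - reflexivity.
  - apply HS, Hg.
  - rewrite IHg, IHh. apply gmul_1l.
  - rewrite IHg. apply ginv_gone.
Qed.

Theorem corollary3p4 :
  forall (x y p q i j u v beta : Z),
    2 <= x -> 2 <= y -> Z.gcd x y = 1 -> 2 <= p -> q = p * x * y - 1 ->
    x * j + y * i = 1 -> p * u - q * v = 1 -> 0 < beta ->
    forall (Q : Group) (a b t : Q),
      gpow a x = gpow b y ->
      gmul (gpow (mu_el a b i j) q) (gpow (lambda_el a b x y i j) p) = gpow t p ->
      (forall g : Q, generated (fun h => h = a \/ h = b \/ h = t) g) ->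
      left_orderable Q ->
      gmul (gpow (muC_el a b t x y i j u v) (p * q * beta - 1))
           (gpow (lambdaC_el a b t x y i j u v p q) beta) <> gone.
Proof.
  (* Coprimality of x and y is already implied by x j + y i = 1. *)
  intros x y p q i j u v beta Hx Hy _ Hp Hq Hji Huv Hbeta Q a b t Hab Hrel Hgen HQ.
  destruct (left_orderable_left_order Q HQ) as [[g0 Hg0] [le Hle]].
  pose proof (commute_mu_el a b x y i j Hab) as Hmc.
  assert (Htp : gpow t p = gpow2 (mu_el a b i j) (gpow a x) (-1) p).
  { rewrite <- Hrel, lambda_el_gpow2, gpow2_gpow, <- (gpow2_k0 _ (gpow a x) q), gpow2_mul
      by exact Hmc.
    f_equal; subst q; ring. }
  intro Hw.
  unfold lambdaC_el in Hw. rewrite muC_el_gpow2 in Hw by exact Hab.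
  apply gpow_eq_of_word_gone in Hw; [|exact Hmc | exact Htp].
  replace ((u - x * y * v) * p + v + p * beta) with (1 + p * beta) in Hw by (subst q; nia).
  destruct (classic (gpow a x = gone)) as [Hc | Hc].
  - apply Hg0, (generated_gone (fun h => h = a \/ h = b \/ h = t)); [|apply Hgen].
    assert (Ha : a = gone) by (apply (left_order_torsion_free le a x); auto; lia).
    assert (Hb : b = gone) by (apply (left_order_torsion_free le b y); [auto | lia | congruence]).
    assert (Ht : t = gone).
    { apply (left_order_torsion_free le t p); [auto | lia |].
      rewrite Htp, Hc. unfold gpow2, mu_el.
      rewrite Ha, Hb, !gpow_gone, gmul_1l, !gpow_gone, gmul_1l. reflexivity. }
    intros h [-> | [-> | ->]]; assumption.
  - destruct (exists_left_order_gt1 le _ Hle Hc) as [le' [Hle' Hc1]].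
    apply (gpow_neq_of_lt le' Hle' _ _ (1 + p * beta) (p * p * beta) Hmc);
      [apply (mu_el_lt_center a b x y i j) | | nia |]; assumption.
Qed.
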